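(* Let $w\in W$. The map $\varkappa^w:T^w\to W^w$, $\Theta\mapsto w_\Theta$, is an order reversing bijection, where $T^w$ is ordered by inclusion and $W^w$ by the Bruhat order.
   Context: Let $\Phi$ be a finite root system with positive roots $\Phi^+$, negative roots $\Phi^-$, Weyl group $W$ with length function $\ell$ and Bruhat order, $W$-invariant scalar product $(\cdot,\cdot)$, reflections $s_\beta$. For $w\in W$, $\Phi^+_w=\{\beta\in\Phi^+\,|\,w^{-1}\beta\in\Phi^-\}$. For pairwise orthogonal $\Theta\subseteq\Phi^+$, $w_\Theta=(\prod_{\beta\in\Theta}s_\beta)w$. $T^w$ is the set of subsets $\Theta\subseteq\Phi^+_w$ consisting of pairwise orthogonal roots with $\ell(w_\Theta)=\ell(w)-|\Theta|$, and $W^w=\{w_\Theta\,|\,\Theta\in T^w\}$. *)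

From Stdlib Require Import ClassicalEpsilon Relation_Operators.
From HB Require Import structures.
From mathcomp Require Import all_boot all_order all_algebra.
Set Implicit Arguments. Unset Strict Implicit. Unset Printing Implicit Defensive.
Import Order.TTheory GRing.Theory Num.Theory.
Local Open Scope ring_scope.

(* Vectors of the Euclidean space V = R^n are column vectors 'cV[R]_n;
   linear maps (Weyl group elements) are matrices acting on the left. *)

Definition dot (R : realFieldType) (n : nat) (u v : 'cV[R]_n) : R :=
  (u^T *m v) 0 0.

(* reflection s_a : v |-> v - 2 (v,a)/(a,a) a, as a matrix *)
Definition refl (R : realFieldType) (n : nat) (a : 'cV[R]_n) : 'M[R]_n :=
  1%:M - ((2 : R) / dot a a) *: (a *m a^T).

Record rootSystem (R : realFieldType) (n : nat) := RootSystem {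
  rs_roots : seq 'cV[R]_n;
  rs_uniq : uniq rs_roots;
  rs_nz : 0 \notin rs_roots;
  rs_refl : forall a b, a \in rs_roots -> b \in rs_roots -> refl a *m b \in rs_roots;
  rs_cryst : forall a b, a \in rs_roots -> b \in rs_roots ->
     exists z : int, (2 : R) * dot a b / dot b b = z%:~R;
  rs_reduced : forall a (c : R), a \in rs_roots -> c *: a \in rs_roots ->
     c = 1 \/ c = -1
}.

Section RS.
Variables (R : realFieldType) (n : nat) (Phi : rootSystem R n).

(* rs_roots as a finite type, so that subsets of rs_roots are finite sets *)
Definition rsroot := seq_sub (rs_roots Phi).

Inductive inW : 'M[R]_n -> Prop :=
| inW1 : inW 1%:M
| inWs : forall a w, a \in rs_roots Phi -> inW w -> inW (refl a *m w).

(* positive system determined by a generic vector g: Phi+ = {a | (g,a) > 0} *)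
Variable g : 'cV[R]_n.
Definition pos (a : 'cV[R]_n) : bool := (a \in rs_roots Phi) && (0 < dot g a).
Definition neg (a : 'cV[R]_n) : bool := pos (- a).

Definition simple (a : 'cV[R]_n) : Prop :=
  pos a /\ ~ (exists b c, pos b /\ pos c /\ a = b + c).

Definition wordlen (w : 'M[R]_n) (k : nat) : Prop :=
  exists s : seq 'cV[R]_n, size s = k /\ (forall a, a \in s -> simple a) /\
    w = foldr (fun a m => refl a *m m) 1%:M s.

Definition len (w : 'M[R]_n) : nat :=
  epsilon (inhabits 0%N)
    (fun k => wordlen w k /\ forall j, wordlen w j -> (k <= j)%N).

Definition bruhat_step (u v : 'M[R]_n) : Prop :=
  exists b, pos b /\ v = refl b *m u /\ (len u < len v)%N.
Definition bruhat_le : 'M[R]_n -> 'M[R]_n -> Prop :=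
  clos_refl_trans 'M[R]_n bruhat_step.

Definition posw (w : 'M[R]_n) (b : 'cV[R]_n) : bool :=
  pos b && neg (invmx w *m b).

Definition wTheta (w : 'M[R]_n) (T : {set rsroot}) : 'M[R]_n :=
  (\big[mulmx/1%:M]_(b in T) refl (val b)) *m w.

Definition Tw (w : 'M[R]_n) (T : {set rsroot}) : Prop :=
  (forall b, b \in T -> posw w (val b)) /\
  (forall b c, b \in T -> c \in T -> b != c -> dot (val b) (val c) = 0) /\
  (len (wTheta w T) + #|T| = len w)%N.

Definition Ww (w u : 'M[R]_n) : Prop := exists T, Tw w T /\ u = wTheta w T.

End RS.

Arguments Tw [R n] Phi g w T.
Arguments wTheta [R n] Phi w T.

From Pilot Require Import Defs.
From Stdlib Require Import ClassicalEpsilon Relation_Operators Classical Wf_nat.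
From HB Require Import structures.
From mathcomp Require Import all_boot all_order all_algebra.
From mathcomp Require Import zify ring.
Set Implicit Arguments. Unset Strict Implicit. Unset Printing Implicit Defensive.
Import Order.TTheory GRing.Theory Num.Theory.
Local Open Scope ring_scope.

(* Injectivity is proved by induction on the length of w.  Pick a simple root
   al with l(s_al w) = l(w) - 1.  If al is in Theta, then Theta minus al lies in
   T^(s_al w) and has the same w_Theta; if not, s_al Theta lies in T^(s_al w),
   because s_al permutes the positive roots other than al, and w_Theta is
   multiplied by s_al.  Comparing lengths shows that two elements of T^w with the
   same w_Theta fall into the same case, so induction applies.  Order reversal:
   adding to Theta a further root b of Phi+_w orthogonal to it multiplies
   w_Theta by s_b and lowers the length, which is a Bruhat relation. *)

Section Euclidean.
Variables (R : realFieldType) (n : nat).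
Implicit Types (u v x a b : 'cV[R]_n) (M : 'M[R]_n).

Lemma trmx_mul_dot u v : u^T *m v = (dot u v)%:M.
Proof. by rewrite /dot {1}[u^T *m v]mx11_scalar. Qed.

Lemma dotC u v : dot u v = dot v u.
Proof. by rewrite /dot -[u^T *m v]trmxK trmx_mul trmxK mxE. Qed.

Lemma dotDr u v x : dot u (v + x) = dot u v + dot u x.
Proof. by rewrite /dot mulmxDr mxE. Qed.

Lemma dotZr u v (c : R) : dot u (c *: v) = c * dot u v.
Proof. by rewrite /dot -scalemxAr mxE. Qed.

Lemma dotNr u v : dot u (- v) = - dot u v.
Proof. by rewrite /dot mulmxN mxE. Qed.

Lemma dotBr u v x : dot u (v - x) = dot u v - dot u x.
Proof. by rewrite dotDr dotNr. Qed.

Lemma dot0r u : dot u 0 = 0.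
Proof. by rewrite /dot mulmx0 mxE. Qed.

Lemma dotDl u v x : dot (v + x) u = dot v u + dot x u.
Proof. by rewrite dotC dotDr !(dotC u). Qed.

Lemma dotZl u v (c : R) : dot (c *: v) u = c * dot v u.
Proof. by rewrite dotC dotZr dotC. Qed.

Lemma dotNl u v : dot (- v) u = - dot v u.
Proof. by rewrite dotC dotNr dotC. Qed.

Lemma dotBl u v x : dot (v - x) u = dot v u - dot x u.
Proof. by rewrite dotDl dotNl. Qed.

Lemma dot0l u : dot 0 u = 0.
Proof. by rewrite dotC dot0r. Qed.

Lemma dot_suml (I : Type) (r : seq I) (P : pred I) (F : I -> 'cV[R]_n) v :
  dot (\sum_(i <- r | P i) F i) v = \sum_(i <- r | P i) dot (F i) v.
Proof. by apply: (big_morph (fun x => dot x v)) => [x y|]; rewrite ?dotDl ?dot0l. Qed.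

Lemma dot_sumr (I : Type) (r : seq I) (P : pred I) (F : I -> 'cV[R]_n) v :
  dot v (\sum_(i <- r | P i) F i) = \sum_(i <- r | P i) dot v (F i).
Proof. by rewrite dotC dot_suml; apply: eq_bigr => i _; rewrite dotC. Qed.

Lemma dot_coordE u v : dot u v = \sum_i u i 0 * v i 0.
Proof. by rewrite /dot mxE; apply: eq_bigr => i _; rewrite mxE. Qed.

Lemma dot_ge0 u : 0 <= dot u u.
Proof. by rewrite dot_coordE sumr_ge0 // => i _; rewrite -expr2 sqr_ge0. Qed.

Lemma dot_eq0 u : (dot u u == 0) = (u == 0).
Proof.
apply/idP/idP => [|/eqP->]; last by rewrite dot0r.
rewrite dot_coordE psumr_eq0 => [/allP u0|i _]; last by rewrite -expr2 sqr_ge0.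
apply/eqP/matrixP => i j; rewrite (ord1 j) mxE.
by apply/eqP; rewrite -sqrf_eq0 expr2 (eqP (u0 i (mem_index_enum _))).
Qed.

Lemma dot_gt0 u : u != 0 -> 0 < dot u u.
Proof. by move=> u0; rewrite lt_def dot_ge0 dot_eq0 u0. Qed.

Lemma dot_mulmxl M u v : dot (M *m u) v = dot u (M^T *m v).
Proof. by rewrite /dot trmx_mul mulmxA. Qed.

Lemma dot_lagrange a b :
  dot a a * (dot a a * dot b b - dot a b ^+ 2) =
  dot (dot a a *: b - dot a b *: a) (dot a a *: b - dot a b *: a).
Proof. by rewrite !dotBl !dotBr !dotZl !dotZr (dotC b a); ring. Qed.

Lemma cauchy_schwarz a b : dot a b ^+ 2 <= dot a a * dot b b.
Proof.
have [->|a0] := eqVneq a 0; first by rewrite !dot0l expr0n /= mul0r.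
have := dot_ge0 (dot a a *: b - dot a b *: a).
by rewrite -dot_lagrange pmulr_rge0 ?dot_gt0 // subr_ge0.
Qed.

Lemma cauchy_schwarz_eq a b : a != 0 -> dot a b ^+ 2 = dot a a * dot b b ->
  b = (dot a b / dot a a) *: a.
Proof.
move=> a0 eq_ab; have aa0 : dot a a != 0 by rewrite dot_eq0.
have /esym/eqP := dot_lagrange a b; rewrite eq_ab subrr mulr0 dot_eq0 subr_eq0.
by move=> /eqP eq_b; apply: (scalerI aa0); rewrite eq_b scalerA mulrC divfK.
Qed.

Definition orthogonal_mx M := M^T *m M = 1%:M.

Lemma orthogonal_mx1 : orthogonal_mx 1%:M.
Proof. by rewrite /orthogonal_mx trmx1 mulmx1. Qed.

Lemma orthogonal_mxM M1 M2 :
  orthogonal_mx M1 -> orthogonal_mx M2 -> orthogonal_mx (M1 *m M2).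
Proof.
rewrite /orthogonal_mx trmx_mul => o1 o2.
by rewrite mulmxA -(mulmxA M2^T) o1 mulmx1 o2.
Qed.

Lemma orthogonal_mxC M : orthogonal_mx M -> M *m M^T = 1%:M.
Proof. exact: mulmx1C. Qed.

Lemma dot_orthogonal_mx M u v : orthogonal_mx M -> dot (M *m u) (M *m v) = dot u v.
Proof. by move=> oM; rewrite dot_mulmxl mulmxA oM mul1mx. Qed.

Lemma orthogonal_invmx M : orthogonal_mx M -> invmx M = M^T.
Proof.
move=> oM; have [_ Mu] := mulmx1_unit oM.
by rewrite -[invmx M]mul1mx -oM -mulmxA mulmxV // mulmx1.
Qed.

Lemma refl_mulmx a x : refl a *m x = x - (2 * dot a x / dot a a) *: a.
Proof.
rewrite /refl mulmxBl mul1mx -scalemxAl -mulmxA trmx_mul_dot.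
by rewrite mul_mx_scalar scalerA mulrAC.
Qed.

Lemma trmx_refl a : (refl a)^T = refl a.
Proof. by rewrite /refl linearB /= trmx1 linearZ /= trmx_mul trmxK. Qed.

Lemma reflN a : refl (- a) = refl a.
Proof. by rewrite /refl dotNl dotNr opprK linearN /= mulmxN mulNmx opprK. Qed.

Lemma refl_self a : a != 0 -> refl a *m a = - a.
Proof.
move=> a0; have aa0 : dot a a != 0 by rewrite dot_eq0.
rewrite refl_mulmx -mulrA divff // mulr1.
by rewrite scaler_nat mulr2n opprD addNKr.
Qed.

Lemma refl_fix a x : dot a x = 0 -> refl a *m x = x.
Proof. by move=> ax0; rewrite refl_mulmx ax0 mulr0 mul0r scale0r subr0. Qed.

Lemma mulmx_outer a b : a *m a^T *m (b *m b^T) = dot a b *: (a *m b^T).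
Proof. by rewrite mulmxA -(mulmxA a) trmx_mul_dot mul_mx_scalar -scalemxAl. Qed.

Lemma refl_invol a : a != 0 -> refl a *m refl a = 1%:M.
Proof.
move=> a0; have aa0 : dot a a != 0 by rewrite dot_eq0.
rewrite /refl mulmxBl mul1mx mulmxBr mulmx1 -!scalemxAl -!scalemxAr mulmx_outer.
rewrite !scalerA.
have -> : 2 / dot a a * (2 / dot a a) * dot a a = 2 / dot a a + 2 / dot a a.
  by field.
by rewrite scalerDl opprB addrK subrK.
Qed.

Lemma refl_cancel a p (M : 'M[R]_(n, p)) : a != 0 -> refl a *m (refl a *m M) = M.
Proof. by move=> a0; rewrite mulmxA refl_invol // mul1mx. Qed.

Lemma orthogonal_refl a : a != 0 -> orthogonal_mx (refl a).
Proof. by move=> a0; rewrite /orthogonal_mx trmx_refl refl_invol. Qed.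

Lemma refl_commute a b : dot a b = 0 -> refl a *m refl b = refl b *m refl a.
Proof.
move=> ab0; rewrite /refl !mulmxBl !mul1mx !mulmxBr !mulmx1.
rewrite -!scalemxAl -!scalemxAr !mulmx_outer ab0 dotC ab0 !scale0r !scaler0.
by rewrite !subr0 -!addrA [- _ + _]addrC.
Qed.

Lemma refl_conj M a : orthogonal_mx M -> M *m refl a *m M^T = refl (M *m a).
Proof.
move=> oM; rewrite /refl mulmxBr mulmx1 mulmxBl orthogonal_mxC //.
by rewrite -scalemxAr -scalemxAl dot_orthogonal_mx // trmx_mul !mulmxA.
Qed.

Lemma refl_conj_refl a b : a != 0 -> refl a *m refl b *m refl a = refl (refl a *m b).
Proof.
by move=> a0; have := refl_conj b (orthogonal_refl a0); rewrite trmx_refl.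
Qed.

End Euclidean.

Lemma sub_count_lt (T : eqType) (p q : pred T) (s : seq T) x :
  subpred p q -> x \in s -> q x -> ~~ p x -> (count p s < count q s)%N.
Proof.
move=> pq; elim: s => [|y s IH] //=; rewrite inE => /orP [/eqP <-|xs] qx npx.
  by rewrite (negbTE npx) qx add0n add1n ltnS sub_count.
have /IH lt_s := xs; have {}lt_s := lt_s qx npx.
case py: (p y); first by rewrite (pq y py) ltn_add2l.
by rewrite add0n (leq_trans lt_s) ?leq_addl.
Qed.

Section RootSystem.
Variables (R : realFieldType) (n : nat) (Phi : rootSystem R n) (g : 'cV[R]_n).
Hypothesis g_regular : forall a, a \in rs_roots Phi -> dot g a != 0.
Local Notation roots := (rs_roots Phi).
Local Notation pos := (pos Phi g).
Local Notation neg := (neg Phi g).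
Local Notation simple := (simple Phi g).
Local Notation inW := (inW Phi).
Implicit Types (a b c : 'cV[R]_n) (w u : 'M[R]_n).

Lemma root_neq0 a : a \in roots -> a != 0.
Proof. by move=> ra; apply: contraNneq (rs_nz Phi) => <-. Qed.

Lemma rootN a : a \in roots -> - a \in roots.
Proof. by move=> ra; rewrite -refl_self ?root_neq0 ?rs_refl. Qed.

Lemma pos_root a : pos a -> a \in roots.
Proof. by case/andP. Qed.

Lemma pos_gt0 a : pos a -> 0 < dot g a.
Proof. by case/andP. Qed.

Lemma pos_neq0 a : pos a -> a != 0.
Proof. by move/pos_root/root_neq0. Qed.

Lemma neg_lt0 a : neg a -> dot g a < 0.
Proof. by case/andP => _; rewrite dotNr oppr_gt0. Qed.

Lemma pos_or_neg a : a \in roots -> pos a \/ neg a.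
Proof.
move=> ra; have := g_regular ra; rewrite neq_lt => /orP [lt0|gt0].
  by right; rewrite /Defs.neg /Defs.pos rootN // dotNr oppr_gt0.
by left; rewrite /Defs.pos ra.
Qed.

Lemma pos_neg_disj a : pos a -> neg a -> False.
Proof. by move=> /pos_gt0 gt0 /neg_lt0 /(lt_trans gt0); rewrite ltxx. Qed.

Lemma notpos_neg a : a \in roots -> ~~ pos a -> neg a.
Proof. by move=> /pos_or_neg[->|]. Qed.

Lemma notneg_pos a : a \in roots -> ~~ neg a -> pos a.
Proof. by move=> /pos_or_neg[|->]. Qed.

Lemma inW_refl a : a \in roots -> inW (refl a).
Proof. by move=> ra; rewrite -[refl a]mulmx1; apply: inWs (inW1 _). Qed.

Lemma inW_mul w u : inW w -> inW u -> inW (w *m u).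
Proof.
elim=> [|a w' ra _ IH] Wu; first by rewrite mul1mx.
by rewrite -mulmxA; apply: inWs (IH Wu).
Qed.

Lemma inW_orthogonal w : inW w -> orthogonal_mx w.
Proof.
elim=> [|a w' ra _ IH]; first exact: orthogonal_mx1.
exact/orthogonal_mxM/IH/orthogonal_refl/root_neq0.
Qed.

Lemma inW_tr w : inW w -> inW w^T.
Proof.
elim=> [|a w' ra _ IH]; first by rewrite trmx1; apply: inW1.
by rewrite trmx_mul trmx_refl; apply: inW_mul IH (inW_refl ra).
Qed.

Lemma inW_root w a : inW w -> a \in roots -> w *m a \in roots.
Proof.
move=> Ww; elim: Ww a => [|b w' rb _ IH] a ra; first by rewrite mul1mx.
by rewrite -mulmxA rs_refl ?IH.
Qed.

Lemma inW_invmx w : inW w -> invmx w = w^T.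
Proof. by move/inW_orthogonal/orthogonal_invmx. Qed.

Definition word (s : seq 'cV[R]_n) : 'M[R]_n :=
  foldr (fun a m => refl a *m m) 1%:M s.
Definition simple_seq (s : seq 'cV[R]_n) := {in s, forall a, simple a}.

Lemma word_cat s t : word (s ++ t) = word s *m word t.
Proof. by elim: s => [|a s IH] /=; rewrite ?mul1mx // IH mulmxA. Qed.

Lemma simple_pos a : simple a -> pos a.
Proof. by case. Qed.

Lemma simple_root a : simple a -> a \in roots.
Proof. by move/simple_pos/pos_root. Qed.

Lemma simple_seq_cons a s : simple_seq (a :: s) <-> simple a /\ simple_seq s.
Proof.
split=> [sas|[sa ss] b]; last by rewrite inE => /orP [/eqP->|/ss].
by split=> [|b bs]; apply: sas; rewrite inE ?eqxx ?bs ?orbT.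
Qed.

Lemma simple_seq_cat s t : simple_seq (s ++ t) <-> simple_seq s /\ simple_seq t.
Proof.
split=> [sst|[ss st] b]; last by rewrite mem_cat => /orP [/ss|/st].
by split=> b bs; apply: sst; rewrite mem_cat bs ?orbT.
Qed.

Lemma inW_word s : simple_seq s -> inW (word s).
Proof.
elim: s => [|a s IH] /=; first by move=> _; apply: inW1.
by case/simple_seq_cons => sa ss; apply: inWs (simple_root sa) (IH ss).
Qed.

Lemma height_ind (P : 'cV[R]_n -> Prop) :
  (forall a, pos a -> (forall b, pos b -> dot g b < dot g a -> P b) -> P a) ->
  forall a, pos a -> P a.
Proof.
move=> IHa; pose lower a := count (fun b => pos b && (dot g b < dot g a)) roots.
suff IHk k a : pos a -> (lower a < k)%N -> P a by move=> a pa; apply: IHk pa (ltnSn _).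
elim: k a => [//|k IH] a pa lt_a; apply: IHa => // b pb lt_ba; apply: IH => //.
rewrite ltnS in lt_a; apply: leq_trans lt_a; apply: (sub_count_lt (x := b)) (pos_root pb) _ _.
- by move=> y /andP[-> lt_y]; apply: lt_trans lt_y lt_ba.
- by rewrite pb lt_ba.
- by rewrite ltxx andbF.
Qed.

Lemma roots_dot_sqr_lt a b : a \in roots -> b \in roots -> b != a -> b != - a ->
  dot a b ^+ 2 < dot a a * dot b b.
Proof.
move=> ra rb ba bNa; rewrite lt_def cauchy_schwarz andbT.
apply/negP => /eqP/esym/(cauchy_schwarz_eq (root_neq0 ra)) eq_b.
have := @rs_reduced _ _ Phi a (dot a b / dot a a) ra; rewrite -eq_b => /(_ rb) [c1|cN1].
- by move: ba; rewrite eq_b c1 scale1r eqxx.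
- by move: bNa; rewrite eq_b cN1 scaleN1r eqxx.
Qed.

(* The Cartan integers of a and b are positive with product < 4, so one is 1. *)
Lemma root_sub_dot_gt0 a b : a \in roots -> b \in roots -> a != b ->
  0 < dot a b -> a - b \in roots.
Proof.
move=> ra rb ab ab_gt0.
have aa_gt0 := dot_gt0 (root_neq0 ra); have bb_gt0 := dot_gt0 (root_neq0 rb).
have bNa : b != - a.
  by apply: contra_ltN ab_gt0 => /eqP->; rewrite dotNr oppr_le0 ltW.
have [z1 z1E] := rs_cryst ra rb; have [z2 z2E] := rs_cryst rb ra.
have z1_gt0 : (0 < z1)%R by rewrite -(ltr_int R) -z1E !mulr_gt0 ?invr_gt0.
have z2_gt0 : (0 < z2)%R.
  by rewrite -(ltr_int R) -z2E dotC !mulr_gt0 ?invr_gt0.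
have z12_lt4 : (z1 * z2 < 4)%R.
  rewrite -(ltr_int R) intrM -z1E -z2E (dotC b a).
  have -> : 2 * dot a b / dot b b * (2 * dot a b / dot a a) =
            4 * (dot a b ^+ 2 / (dot a a * dot b b)) by field; rewrite !gt_eqF.
  rewrite -[X in _ < X]mulr1 ltr_pM2l // ltr_pdivrMr ?mul1r ?mulr_gt0 //.
  by rewrite roots_dot_sqr_lt // eq_sym.
have [z1_1|z2_1] : (z1 = 1 \/ z2 = 1)%R by lia.
- by have := rs_refl rb ra; rewrite refl_mulmx (dotC b a) z1E z1_1 scale1r.
- have := rootN (rs_refl ra rb).
  by rewrite refl_mulmx (dotC a b) z2E z2_1 scale1r opprB.
Qed.

Lemma simple_dot_le0 a b : simple a -> simple b -> a != b -> dot a b <= 0.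
Proof.
move=> sa sb ab; rewrite leNgt; apply/negP => /(root_sub_dot_gt0 (simple_root sa)).
move=> /(_ (simple_root sb) ab) /pos_or_neg [p_ab|n_ab].
- by case: sa => _; apply; exists (a - b), b; rewrite subrK (simple_pos sb).
- by case: sb => _; apply; exists (b - a), a; rewrite subrK -opprB (simple_pos sa).
Qed.

Lemma pos_sum_simple a : pos a -> exists2 s, simple_seq s & a = \sum_(x <- s) x.
Proof.
elim/height_ind=> {}a pa IH.
have [sa|nsa] := classic (simple a).
  by exists [:: a]; [move=> b; rewrite inE => /eqP->|rewrite big_seq1].
have [b [c [pb [pc aE]]]] : exists b c, pos b /\ pos c /\ a = b + c.
  by apply: NNPP => nbc; apply: nsa.
have [|sb ssb bE] := IH b pb; first by rewrite aE dotDr ltrDl pos_gt0.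
have [|sc ssc cE] := IH c pc; first by rewrite aE dotDr ltrDr pos_gt0.
by exists (sb ++ sc); [apply/simple_seq_cat|rewrite big_cat aE bE cE].
Qed.

(* The part L of the sum away from al is a multiple of al with (L, al) <= 0
   (simple roots form obtuse angles) and (g, L) >= 0, hence L = 0. *)
Lemma simple_sum_scale al s (c : R) : simple al -> simple_seq s ->
  \sum_(x <- s) x = c *: al -> {in s, forall x, x = al}.
Proof.
move=> sal ss sumE; have gal := pos_gt0 (simple_pos sal).
set L := \sum_(x <- s | x != al) x.
have LE : L = (c - (count_mem al s)%:R) *: al.
  have alE : \sum_(x <- s | x == al) x = (count_mem al s)%:R *: al.
    rewrite (eq_bigr (fun=> al)) => [|x /eqP//].
    by rewrite big_const_seq iter_addr addr0 scaler_nat.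
  by rewrite scalerBl -sumE (bigID (pred1 al)) /= alE addrAC subrr add0r.
have L_al : dot L al <= 0.
  rewrite dot_suml big_seq_cond; apply: sumr_le0 => x /andP [xs xal].
  exact: simple_dot_le0 (ss x xs) sal xal.
have gL_ge0 : 0 <= dot g L.
  by rewrite dot_sumr big_seq_cond sumr_ge0 // => x /andP[/ss/simple_pos/pos_gt0/ltW].
have L0 : L = 0.
  have [cm_ge0|cm_lt0] := leP 0 (c - (count_mem al s)%:R).
    apply/eqP; rewrite -dot_eq0 eq_le dot_ge0 andbT.
    by rewrite {1}LE dotZl dotC mulr_ge0_le0.
  by move: gL_ge0; rewrite LE dotZr pmulr_lge0 // leNgt cm_lt0.
move=> x xs; apply/eqP/negPn/negP => xal.
have gx_gt0 := pos_gt0 (simple_pos (ss x xs)).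
have /eqP := congr1 (dot g) L0; rewrite dot0r dot_sumr big_seq_cond psumr_eq0.
  by move=> /allP/(_ x); rewrite xs xal (gt_eqF gx_gt0) => /(_ isT).
by move=> y /andP[/ss/simple_pos/pos_gt0/ltW].
Qed.

Lemma simple_refl_neg al be : simple al -> pos be -> neg (refl al *m be) -> be = al.
Proof.
move=> sal pbe nbe'; have ral := simple_root sal.
have [sb ssb beE] := pos_sum_simple pbe; have [sg ssg beE'] := pos_sum_simple nbe'.
have sumE : \sum_(x <- sb ++ sg) x = (2 * dot al be / dot al al) *: al.
  by rewrite big_cat /= -beE -beE' refl_mulmx opprB addrC subrK.
have sb_al : {in sb, forall x, x = al}.
  move=> x xs; apply: (simple_sum_scale sal _ sumE); last by rewrite mem_cat xs.
  exact/simple_seq_cat.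
have {}beE : be = (size sb)%:R *: al.
  by rewrite beE (eq_big_seq (fun=> al)) // big_const_seq iter_addr addr0 scaler_nat count_predT.
have := @rs_reduced _ _ Phi al (size sb)%:R ral; rewrite -beE => /(_ (pos_root pbe)).
case=> [sb1|sbN1]; first by rewrite beE sb1 scale1r.
by have := ler0n R (size sb); rewrite sbN1 lerNr oppr0 ler10.
Qed.
Lemma simple_refl_pos al be : simple al -> pos be -> be != al -> pos (refl al *m be).
Proof.
move=> sal pbe be_al; apply: (notneg_pos).
  exact: rs_refl (simple_root sal) (pos_root pbe).
by apply: contra be_al => /(simple_refl_neg sal pbe)->.
Qed.

(* Induction on height: reflecting a by a simple root al with (a, al) > 0
   gives a lower positive root, and s_a = s_al s_{s_al a} s_al. *)
Lemma refl_pos_word a : pos a -> exists2 s, simple_seq s & refl a = word s.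
Proof.
elim/height_ind=> {}a pa IH.
have [sa|nsa] := classic (simple a).
  by exists [:: a]; [move=> b; rewrite inE => /eqP->|rewrite /= mulmx1].
have [s ss aE] := pos_sum_simple pa.
have [al als a_al] : exists2 al, al \in s & 0 < dot a al.
  apply: NNPP => none; have := dot_gt0 (pos_neq0 pa).
  rewrite {2}aE dot_sumr big_seq_cond ltNge => /negP; apply.
  by apply: sumr_le0 => x /andP[xs _]; rewrite leNgt; apply/negP => ?; apply: none; exists x.
have sal := ss al als; have al0 := pos_neq0 (simple_pos sal).
have a_neq_al : a != al by apply: contra_not_neq nsa => ->.
have [|s' ss' s'E] := IH (refl al *m a) (simple_refl_pos sal pa a_neq_al).
  have gal_gt0 := pos_gt0 (simple_pos sal).
  rewrite refl_mulmx dotBr dotZr ltrBlDr ltrDl mulr_gt0 //.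
  by rewrite !mulr_gt0 ?invr_gt0 ?dot_gt0 // dotC.
exists (al :: s' ++ [:: al]).
  apply/simple_seq_cons; split=> //; apply/simple_seq_cat; split=> // b.
  by rewrite inE => /eqP->.
by rewrite /= word_cat -s'E /= mulmx1 mulmxA refl_conj_refl // refl_cancel.
Qed.

Lemma refl_word a : a \in roots -> exists2 s, simple_seq s & refl a = word s.
Proof.
move=> ra; have [pa|na] := pos_or_neg ra; first exact: refl_pos_word.
by rewrite -reflN; apply: refl_pos_word.
Qed.

Lemma inW_word_simple w : inW w -> exists2 s, simple_seq s & w = word s.
Proof.
elim=> [|a w' ra _ [s ss ->]]; first by exists [::].
have [sa ssa ->] := refl_word ra.
by exists (sa ++ s); [apply/simple_seq_cat|rewrite word_cat].
Qed.

End RootSystem.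

Lemma ex_minimal_nat (P : nat -> Prop) :
  (exists k, P k) -> exists k, P k /\ forall j, P j -> (k <= j)%N.
Proof.
move=> [k Pk]; elim/(well_founded_ind Wf_nat.lt_wf): k Pk => k IH Pk.
have [[j [Pj lt_jk]]|none] := classic (exists j, P j /\ (j < k)%N).
  by apply: (IH j) => //; apply/ssrnat.ltP.
exists k; split=> // j Pj; rewrite leqNgt; apply/negP => lt_jk.
by apply: none; exists j.
Qed.

Section Length.
Variables (R : realFieldType) (n : nat) (Phi : rootSystem R n) (g : 'cV[R]_n).
Hypothesis g_regular : forall a, a \in rs_roots Phi -> dot g a != 0.
Local Notation pos := (pos Phi g).
Local Notation neg := (neg Phi g).
Local Notation simple := (simple Phi g).
Local Notation inW := (inW Phi).
Local Notation word := (@word R n).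
Local Notation simple_seq := (simple_seq Phi g).
Local Notation len := (len Phi g).
Implicit Types (a : 'cV[R]_n) (w : 'M[R]_n).

Lemma wordlenP w k :
  wordlen Phi g w k <-> exists s, [/\ simple_seq s, size s = k & w = word s].
Proof. by split=> [[s [? [? ?]]]|[s [? ? ?]]]; exists s. Qed.

Lemma len_spec w : inW w ->
  wordlen Phi g w (len w) /\ forall k, wordlen Phi g w k -> (len w <= k)%N.
Proof.
move=> Ww; pose minimal k := wordlen Phi g w k /\ forall j, wordlen Phi g w j -> (k <= j)%N.
apply: (epsilon_spec (inhabits 0%N) minimal).
apply: ex_minimal_nat; have [s ss wE] := inW_word_simple g_regular Ww.
by exists (size s); apply/wordlenP; exists s.
Qed.

Lemma len_word s : simple_seq s -> (len (word s) <= size s)%N.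
Proof.
by move=> ss; apply: (len_spec (inW_word ss)).2; apply/wordlenP; exists s.
Qed.

Lemma reduced_word w : inW w -> exists s, [/\ simple_seq s, size s = len w & w = word s].
Proof. by move/len_spec => [/wordlenP]. Qed.

Lemma exchange s be : simple_seq s -> pos be -> neg ((word s)^T *m be) ->
  exists s', [/\ simple_seq s', (size s' < size s)%N & refl be *m word s = word s'].
Proof.
elim: s be => [|a s IH] be; first by rewrite trmx1 mul1mx => _ /pos_neg_disj.
case/simple_seq_cons => sa ss pbe; have a0 := pos_neq0 (simple_pos sa).
rewrite /= trmx_mul trmx_refl -mulmxA => nbe.
have [pbe'|nbe'] := pos_or_neg g_regular (rs_refl (simple_root sa) (pos_root pbe)).
  have [s' [ss' lt_s' s'E]] := IH _ ss pbe' nbe.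
  exists (a :: s'); split=> //; first exact/simple_seq_cons.
  by rewrite /= -s'E -refl_conj_refl // !mulmxA refl_invol // mul1mx.
rewrite (simple_refl_neg g_regular sa pbe nbe').
by exists s; split=> //; rewrite refl_cancel.
Qed.

Lemma len_refl_lt w be : inW w -> pos be -> neg (w^T *m be) ->
  (len (refl be *m w) < len w)%N.
Proof.
move=> Ww pbe; have [s [ss <- wE]] := reduced_word Ww; rewrite wE => nbe.
have [s' [ss' lt_s' ->]] := exchange ss pbe nbe.
exact: leq_ltn_trans (len_word ss') lt_s'.
Qed.

Lemma len_refl_gt w be : inW w -> pos be -> pos (w^T *m be) ->
  (len w < len (refl be *m w))%N.
Proof.
move=> Ww pbe pbe'; have be0 := pos_neq0 pbe.
have := len_refl_lt (inWs (pos_root pbe) Ww) pbe; rewrite refl_cancel //; apply.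
by rewrite trmx_mul trmx_refl -mulmxA refl_self // mulmxN /Defs.neg opprK.
Qed.

Lemma len_refl_simple_le w a : inW w -> simple a -> (len (refl a *m w) <= (len w).+1)%N.
Proof.
move=> Ww sa; have [s [ss <- ->]] := reduced_word Ww.
by apply: (len_word (s := a :: s)); exact/simple_seq_cons.
Qed.

Lemma len_refl_simple_ge w a : inW w -> simple a -> (len w <= (len (refl a *m w)).+1)%N.
Proof.
move=> Ww sa; have ra := simple_root sa; have a0 := root_neq0 ra.
by have := len_refl_simple_le (inWs ra Ww) sa; rewrite refl_cancel.
Qed.

Lemma descent_simple w : inW w -> (0 < len w)%N ->
  exists2 a, simple a & neg (w^T *m a).
Proof.
move=> Ww; have [[|a s] [ss sE wE]] := reduced_word Ww; first by rewrite -sE.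
case/simple_seq_cons: (ss) => sa ss' _; exists a => //.
apply: (notpos_neg g_regular); first exact: inW_root (inW_tr Ww) (simple_root sa).
apply/negP => /(len_refl_gt Ww (simple_pos sa)).
have a0 := pos_neq0 (simple_pos sa).
rewrite {2}wE /= refl_cancel // -sE ltnNge.
by rewrite (leq_trans (len_word ss')) ?leqW.
Qed.

Lemma len_descent w al : inW w -> simple al -> neg (w^T *m al) ->
  (len (refl al *m w)).+1 = len w.
Proof.
move=> Ww sal nal; apply/eqP; rewrite eqn_leq len_refl_simple_ge // andbT.
exact: len_refl_lt Ww (simple_pos sal) nal.
Qed.

End Length.

Lemma prodr_setU1_comm (Rg : pzRingType) (I : finType) (A : {set I}) i (F : I -> Rg) :
  i \notin A -> {in A, forall j, GRing.comm (F j) (F i)} ->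
  \prod_(j in i |: A) F j = F i * \prod_(j in A) F j.
Proof.
move=> iA cA; have := mem_index_enum i.
elim: (index_enum I) (index_enum_uniq I) => [//|x r IH] /andP[xr ur].
rewrite !big_cons in_setU1 inE; have [xi|xi] /= := eqVneq x i.
  subst x; rewrite (negbTE iA) => _; congr (_ * _).
  rewrite big_seq_cond [RHS]big_seq_cond; apply: eq_bigl => j.
  by rewrite in_setU1; case: eqVneq => [->|]; rewrite ?(negbTE xr).
move=> ir; rewrite IH //; case: ifP => // xA.
by rewrite !mulrA (cA x xA).
Qed.

Lemma setU1_ind (I : finType) (P : {set I} -> Prop) :
  P set0 -> (forall (i : I) (A : {set I}), i \notin A -> P A -> P (i |: A)) ->
  forall A, P A.
Proof.
move=> P0 PU1 A; elim: {A}#|A| {-2}A (erefl #|A|) => [|k IH] A cardA.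
  by move/eqP: cardA; rewrite cards_eq0 => /eqP->.
have /set0Pn[i iA] : A != set0 by rewrite -card_gt0 cardA.
rewrite -(setD1K iA); apply: PU1; first by rewrite setD11.
by apply: IH; move: cardA; rewrite (cardsD1 i) iA => -[].
Qed.

Section ReflectionProducts.
Variables (R : realFieldType) (n : nat) (Phi : rootSystem R n).
Local Notation roots := (rs_roots Phi).
Local Notation rt := (rsroot Phi).
Implicit Types (x : 'cV[R]_n) (T : {set rt}) (b c : rt).

Definition prod_refl T : 'M[R]_n := \prod_(b in T) refl (val b).
Definition orthogonal_set T := {in T &, forall b c, b != c -> dot (val b) (val c) = 0}.

Lemma rsroot_neq0 b : val b != 0.
Proof. exact/root_neq0/valP. Qed.

Lemma prod_refl0 : prod_refl set0 = 1%:M.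
Proof. by rewrite /prod_refl big_set0. Qed.

Lemma orthogonal_setS T1 T2 : T1 \subset T2 -> orthogonal_set T2 -> orthogonal_set T1.
Proof. by move=> /subsetP sT oT b c /sT bT /sT cT; apply: oT. Qed.

Lemma orthogonal_setU1 b T : orthogonal_set (b |: T) -> orthogonal_set T.
Proof. exact/orthogonal_setS/subsetUr. Qed.

Lemma orthogonal_setU1_dot b T : b \notin T -> orthogonal_set (b |: T) ->
  {in T, forall c, dot (val c) (val b) = 0}.
Proof.
move=> bT oT c cT; apply: oT; rewrite ?setU11 ?setU1r //.
by apply: contraNneq bT => <-.
Qed.

Lemma prod_reflU1 b T : b \notin T -> orthogonal_set (b |: T) ->
  prod_refl (b |: T) = refl (val b) *m prod_refl T.
Proof.
move=> bT oT; apply: prodr_setU1_comm => // c cT.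
exact/refl_commute/(orthogonal_setU1_dot bT oT).
Qed.

Lemma inW_prod_refl T : inW Phi (prod_refl T).
Proof.
rewrite /prod_refl; apply: (big_ind (inW Phi)); first exact: inW1.
  exact: inW_mul.
by move=> b _; apply/inW_refl/valP.
Qed.

Lemma prod_refl_fix T x : orthogonal_set T -> {in T, forall b, dot (val b) x = 0} ->
  prod_refl T *m x = x.
Proof.
elim/setU1_ind: T => [|b T bT IH] oT Tx; first by rewrite prod_refl0 mul1mx.
have TxU1 : {in T, forall c, dot (val c) x = 0} by move=> c cT; rewrite Tx ?setU1r.
by rewrite prod_reflU1 // -mulmxA (IH (orthogonal_setU1 oT) TxU1) refl_fix // Tx ?setU11.
Qed.

Lemma prod_refl_commute T x : orthogonal_set T -> {in T, forall b, dot (val b) x = 0} ->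
  refl x *m prod_refl T = prod_refl T *m refl x.
Proof.
elim/setU1_ind: T => [|b T bT IH] oT Tx; first by rewrite prod_refl0 mul1mx mulmx1.
have TxU1 : {in T, forall c, dot (val c) x = 0} by move=> c cT; rewrite Tx ?setU1r.
have xb : dot x (val b) = 0 by rewrite dotC Tx ?setU11.
by rewrite prod_reflU1 // mulmxA refl_commute // -!mulmxA (IH (orthogonal_setU1 oT) TxU1).
Qed.

Lemma prod_reflD1 T b : orthogonal_set T -> b \in T ->
  prod_refl T = refl (val b) *m prod_refl (T :\ b).
Proof. by move=> oT bT; rewrite -{1}(setD1K bT) prod_reflU1 ?setD11 ?setD1K. Qed.

Lemma prod_refl_root T b : orthogonal_set T -> b \in T -> prod_refl T *m val b = - val b.
Proof.
move=> oT bT; have oT' : orthogonal_set (b |: T :\ b) by rewrite setD1K.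
rewrite (prod_reflD1 oT bT) -mulmxA prod_refl_fix.
- exact/refl_self/rsroot_neq0.
- exact: orthogonal_setU1 oT'.
- by apply: orthogonal_setU1_dot oT'; rewrite setD11.
Qed.

Lemma trmx_prod_refl T : orthogonal_set T -> (prod_refl T)^T = prod_refl T.
Proof.
elim/setU1_ind: T => [|b T bT IH] oT; first by rewrite prod_refl0 trmx1.
have oT' := orthogonal_setU1 oT.
rewrite prod_reflU1 // trmx_mul (IH oT') trmx_refl.
by rewrite prod_refl_commute //; apply: orthogonal_setU1_dot.
Qed.

Definition refl_rsroot x b : rt := insubd b (refl x *m val b).

Lemma refl_rsrootE x b : x \in roots -> val (refl_rsroot x b) = refl x *m val b.
Proof. by move=> rx; rewrite val_insubd (rs_refl rx (valP b)). Qed.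

Lemma refl_rsroot_inj x : x \in roots -> injective (refl_rsroot x).
Proof.
move=> rx b c /(congr1 val); rewrite !refl_rsrootE // => /(congr1 (mulmx (refl x))).
by rewrite !refl_cancel ?(root_neq0 rx) // => /val_inj.
Qed.

Lemma orthogonal_set_refl x T : x \in roots -> orthogonal_set T ->
  orthogonal_set (refl_rsroot x @: T).
Proof.
move=> rx oT _ _ /imsetP[b bT ->] /imsetP[c cT ->] bc.
have ox := orthogonal_refl (root_neq0 rx).
rewrite !refl_rsrootE // dot_orthogonal_mx //.
by apply: oT => //; apply: contraNneq bc => ->.
Qed.

Lemma prod_refl_conj x T : x \in roots -> orthogonal_set T ->
  prod_refl (refl_rsroot x @: T) = refl x *m prod_refl T *m refl x.
Proof.
move=> rx; have x0 := root_neq0 rx.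
elim/setU1_ind: T => [|b T bT IH] oT.
  by rewrite imset0 prod_refl0 mulmx1 refl_invol.
have oT' := orthogonal_set_refl rx oT; rewrite imsetU1 in oT' *.
rewrite prod_reflU1 ?(mem_imset _ _ (refl_rsroot_inj rx)) // (IH (orthogonal_setU1 oT)).
rewrite prod_reflU1 // refl_rsrootE // -refl_conj_refl //.
by rewrite !mulmxA -(mulmxA _ (refl x) (refl x)) refl_invol // mulmx1.
Qed.

End ReflectionProducts.

Section Main.
Variables (R : realFieldType) (n : nat) (Phi : rootSystem R n) (g : 'cV[R]_n).
Hypothesis g_regular : forall a, a \in rs_roots Phi -> dot g a != 0.
Local Notation pos := (pos Phi g).
Local Notation neg := (neg Phi g).
Local Notation simple := (simple Phi g).
Local Notation inW := (inW Phi).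
Local Notation len := (len Phi g).
Local Notation posw := (posw Phi g).
Local Notation Tw := (Tw Phi g).
Local Notation rt := (rsroot Phi).
Local Notation prod_refl := (@prod_refl R n Phi).
Local Notation orthogonal_set := (@orthogonal_set R n Phi).
Implicit Types (x : 'cV[R]_n) (w : 'M[R]_n) (T : {set rt}) (a b : rt).

Lemma wThetaE w T : wTheta Phi w T = prod_refl T *m w.
Proof. by []. Qed.

Lemma poswE w x : inW w -> posw w x = pos x && neg (w^T *m x).
Proof. by move=> Ww; rewrite /Defs.posw (inW_invmx Ww). Qed.

Lemma len_prod_refl_le w T : inW w -> orthogonal_set T -> {in T, forall b, posw w (val b)} ->
  (len (prod_refl T *m w) + #|T| <= len w)%N.
Proof.
move=> Ww; elim/setU1_ind: T => [|b T bT IH] oT Tpos.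
  by rewrite prod_refl0 mul1mx cards0 addn0.
have oT' := orthogonal_setU1 oT.
have := Tpos b (setU11 b T); rewrite poswE // => /andP[pb nb].
have lt_b : (len (refl (val b) *m (prod_refl T *m w)) < len (prod_refl T *m w))%N.
  apply: (len_refl_lt g_regular (inW_mul (inW_prod_refl _) Ww) pb).
  rewrite trmx_mul -mulmxA trmx_prod_refl // prod_refl_fix //.
  exact: orthogonal_setU1_dot.
have le_T := IH oT' (fun c cT => Tpos c (setU1r b cT)).
by rewrite prod_reflU1 // -mulmxA cardsU1 bT add1n addnS (leq_trans _ le_T) // ltn_add2r.
Qed.

Lemma bruhat_step_prod_reflU1 w T b : inW w -> b \notin T -> orthogonal_set (b |: T) ->
  posw w (val b) -> bruhat_step Phi g (prod_refl (b |: T) *m w) (prod_refl T *m w).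
Proof.
move=> Ww bT oT; rewrite poswE // => /andP[pb nb].
have b0 := rsroot_neq0 b; have oT' := orthogonal_setU1 oT.
rewrite prod_reflU1 // -mulmxA.
exists (val b); split=> //; split; first by rewrite refl_cancel.
apply: (len_refl_lt g_regular (inW_mul (inW_prod_refl _) Ww) pb).
rewrite trmx_mul -mulmxA (trmx_prod_refl oT') prod_refl_fix //.
exact: orthogonal_setU1_dot.
Qed.

Lemma bruhat_le_prod_refl w T1 T2 : inW w -> T1 \subset T2 -> orthogonal_set T2 ->
  {in T2, forall b, posw w (val b)} ->
  bruhat_le Phi g (prod_refl T2 *m w) (prod_refl T1 *m w).
Proof.
move=> Ww sT12 oT2 T2w.
suff le_S (S : {set rt}) : S \subset T2 :\: T1 ->
    bruhat_le Phi g (prod_refl (T1 :|: S) *m w) (prod_refl T1 *m w).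
  by have := le_S _ (subxx _); rewrite setDE setUIr setUCr setIT (setUidPr sT12).
elim/setU1_ind: S => [_|b S bS IH].
  by rewrite setU0; apply: rt_refl.
rewrite subUset sub1set in_setD => /andP[/andP[bT1 bT2] sS].
have sbS : b |: (T1 :|: S) \subset T2.
  by rewrite subUset sub1set bT2 subUset sT12 (subset_trans sS) ?subsetDl.
rewrite setUCA; apply: rt_trans (IH sS); apply: rt_step.
apply: bruhat_step_prod_reflU1 => //; last exact: T2w.
- by rewrite in_setU negb_or bT1.
- exact: orthogonal_setS sbS oT2.
Qed.

Lemma posw_refl_rsroot w a b : inW w -> simple (val a) -> b != a -> posw w (val b) ->
  posw (refl (val a) *m w) (val (refl_rsroot (val a) b)).
Proof.
move=> Ww sa ba; have ra := simple_root sa; have a0 := root_neq0 ra.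
rewrite (poswE _ Ww) (poswE _ (inWs ra Ww)) refl_rsrootE // => /andP[pb nb].
rewrite simple_refl_pos ?(inj_eq val_inj) //=.
by rewrite trmx_mul trmx_refl -mulmxA refl_cancel.
Qed.

Section Descent.
Variables (w : 'M[R]_n) (a : rt).
Hypotheses (Ww : inW w) (sa : simple (val a)) (na : neg (w^T *m val a)).

Let ra : val a \in rs_roots Phi := valP a.
Let a0 : val a != 0 := rsroot_neq0 a.
Let Wsaw : inW (refl (val a) *m w) := inWs ra Ww.
Let len_saw : (len (refl (val a) *m w)).+1 = len w := len_descent g_regular Ww sa na.

Lemma Tw_conj_descent T : Tw w T -> a \notin T ->
  Tw (refl (val a) *m w) (refl_rsroot (val a) @: T).
Proof.
move=> [Tpos [oT Tlen]] aT.
have oT' := orthogonal_set_refl ra oT.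
have T'pos : {in refl_rsroot (val a) @: T, forall b, posw (refl (val a) *m w) (val b)}.
  move=> _ /imsetP[b bT ->]; apply: posw_refl_rsroot => //; last exact: Tpos.
  by apply: contraNneq aT => <-.
split=> //; split=> //; apply/eqP; rewrite eqn_leq len_prod_refl_le //=.
rewrite wThetaE card_imset; last exact: refl_rsroot_inj.
rewrite (prod_refl_conj ra oT) -!mulmxA refl_cancel //.
rewrite -ltnS len_saw -Tlen -addSn leq_add2r.
rewrite wThetaE len_refl_simple_ge //; exact/inW_mul/Ww/inW_prod_refl.
Qed.

Lemma Tw_remove_descent T : Tw w T -> a \in T -> Tw (refl (val a) *m w) (T :\ a).
Proof.
move=> [Tpos [oT]]; rewrite wThetaE => Tlen aT.
have oT' : orthogonal_set (a |: T :\ a) by rewrite setD1K.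
have aT' : {in T :\ a, forall c, dot (val c) (val a) = 0}.
  by apply: orthogonal_setU1_dot oT'; rewrite setD11.
split; [|split].
- move=> c /[dup] /aT' ca /setD1P[_ cT]; have := Tpos c cT.
  rewrite !poswE // => /andP[-> nc] /=.
  by rewrite trmx_mul trmx_refl -mulmxA refl_fix // dotC.
- exact: orthogonal_setU1 oT'.
rewrite wThetaE mulmxA -(prod_refl_commute (orthogonal_setU1 oT') aT').
rewrite -prod_reflD1 //; apply/eqP; rewrite -eqSS -addnS len_saw -Tlen.
by rewrite (cardsD1 a T) aT add1n.
Qed.

Lemma Tw_descent_mem T1 T2 : Tw w T1 -> Tw w T2 -> prod_refl T1 = prod_refl T2 ->
  a \in T1 -> a \in T2.
Proof.
move=> T1w T2w eqT aT1; apply/negPn/negP => aT2.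
have [_ [oT1]] := T1w; rewrite wThetaE => T1len.
have [_ [_]] := T2w; rewrite wThetaE -eqT => T2len.
have [_ [_]] := Tw_conj_descent T2w aT2.
rewrite wThetaE card_imset; last exact: refl_rsroot_inj.
have [_ [oT2 _]] := T2w; rewrite prod_refl_conj // -!mulmxA refl_cancel // -eqT.
have : (len (prod_refl T1 *m w) < len (refl (val a) *m (prod_refl T1 *m w)))%N.
  apply: (len_refl_gt g_regular (inW_mul (inW_prod_refl _) Ww) (simple_pos sa)).
  by rewrite trmx_mul -mulmxA trmx_prod_refl // prod_refl_root // mulmxN.
by move: T1len T2len len_saw; move: #|T1| #|T2| => t1 t2; lia.
Qed.

End Descent.

Lemma descent_rsroot w : inW w -> (0 < len w)%N ->
  exists2 a : rt, simple (val a) & neg (w^T *m val a).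
Proof.
move=> Ww /(descent_simple g_regular Ww)[al sal nal].
by exists (Sub al (simple_root sal)); rewrite SubK.
Qed.

Lemma Tw_prod_refl_inj w T1 T2 : inW w -> Tw w T1 -> Tw w T2 ->
  prod_refl T1 = prod_refl T2 -> T1 = T2.
Proof.
move=> Ww; move Ek: (len w) => k.
elim/ltn_ind: k w Ww Ek T1 T2 => k IH w Ww Ek T1 T2 T1w T2w eqT.
have [k0|k_gt0] := posnP k.
  have T0 T : Tw w T -> T = set0.
    by case=> _ [_ /eqP]; rewrite Ek k0 addn_eq0 cards_eq0 => /andP[_ /eqP].
  by rewrite (T0 _ T1w) (T0 _ T2w).
have [|a sal nal] := descent_rsroot Ww; first by rewrite Ek.
have lt_k : (len (refl (val a) *m w) < k)%N by rewrite -Ek -(len_descent g_regular Ww sal nal).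
have IHa := IH _ lt_k _ (inWs (valP a) Ww) erefl.
have [_ [oT1 _]] := T1w; have [_ [oT2 _]] := T2w.
have [aT1|aT1] := boolP (a \in T1).
  have aT2 := Tw_descent_mem Ww sal nal T1w T2w eqT aT1.
  rewrite -(setD1K aT1) -(setD1K aT2); congr (_ |: _).
  apply: IHa; try exact: Tw_remove_descent.
  move: eqT; rewrite (prod_reflD1 oT1 aT1) (prod_reflD1 oT2 aT2).
  by move=> /(congr1 (mulmx (refl (val a)))); rewrite !refl_cancel ?rsroot_neq0.
have aT2 := contra (Tw_descent_mem Ww sal nal T2w T1w (esym eqT)) aT1.
apply: (imset_inj (refl_rsroot_inj (valP a))).
apply: IHa; try exact: Tw_conj_descent.
by rewrite !prod_refl_conj ?eqT ?(valP a).
Qed.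

End Main.

Theorem mainTheorem16 (R : realFieldType) (n : nat) (Phi : rootSystem R n)
  (g : 'cV[R]_n) (hg : forall a, a \in rs_roots Phi -> dot g a != 0)
  (w : 'M[R]_n) (hw : inW Phi w) :
  (* injective on T^w *)
  (forall T1 T2 : {set rsroot Phi}, Tw Phi g w T1 -> Tw Phi g w T2 ->
      wTheta Phi w T1 = wTheta Phi w T2 -> T1 = T2) /\
  (* onto W^w *)
  (forall u, Ww Phi g w u -> exists T, Tw Phi g w T /\ u = wTheta Phi w T) /\
  (* order reversing: inclusion vs Bruhat order *)
  (forall T1 T2 : {set rsroot Phi}, Tw Phi g w T1 -> Tw Phi g w T2 ->
      T1 \subset T2 -> bruhat_le Phi g (wTheta Phi w T2) (wTheta Phi w T1)).
Proof.
split; [|split].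
- move=> T1 T2 T1w T2w; rewrite !wThetaE => /(congr1 (mulmx^~ w^T)).
  rewrite -!mulmxA (orthogonal_mxC (inW_orthogonal hw)) !mulmx1.
  exact: (Tw_prod_refl_inj hg hw T1w T2w).
- by move=> u [T [Tw_T ->]]; exists T.
- by move=> T1 T2 _ [T2pos [oT2 _]] sT12; apply: bruhat_le_prod_refl.
Qed.
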